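(* Let $R$ be a ring with unity, let $a,b,c,d\in R$ with $a$ and $d$ both left $(b,c)$-invertible. Let $x$ be any left $(b,c)$-inverse of $a$ and $y$ any left $(b,c)$-inverse of $d$. Then (1) $ydx$ is a left $(b,c)$-inverse of $a$; (2) $xay$ is a left $(b,c)$-inverse of $d$.
   Context: For $u,b,c\in R$, $u$ is left $(b,c)$-invertible if there exists $x\in Rc$ with $xub=b$; any such $x$ is a left $(b,c)$-inverse of $u$, denoted $u_l^{(b,c)}$ (not necessarily unique). *)

From mathcomp Require Import all_boot all_algebra.
Set Implicit Arguments. Unset Strict Implicit. Unset Printing Implicit Defensive.
Import GRing.Theory.
Local Open Scope ring_scope.

Definition left_bc_inverse (R : pzRingType) (b c u x : R) : Prop :=
  (exists r : R, x = r * c) /\ x * u * b = b.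

Definition left_bc_invertible (R : pzRingType) (b c u : R) : Prop :=
  exists x : R, left_bc_inverse b c u x.

From mathcomp Require Import all_boot all_algebra.
Local Open Scope ring_scope.
Import GRing.Theory.

Lemma left_bc_inverse_mull (R : pzRingType) (b c a d x y : R) :
  left_bc_inverse b c a x -> y * d * b = b -> left_bc_inverse b c a (y * d * x).
Proof.
move=> [[r xE] xab] ydb; split; first by exists (y * d * r); rewrite xE mulrA.
have -> : y * d * x * a * b = y * d * (x * a * b) by rewrite !mulrA.
by rewrite xab.
Qed.

Theorem theorem3p17 (R : pzRingType) (a b c d x y : R) :
  left_bc_invertible b c a -> left_bc_invertible b c d ->
  left_bc_inverse b c a x -> left_bc_inverse b c d y ->
  left_bc_inverse b c a (y * d * x) /\ left_bc_inverse b c d (x * a * y).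
Proof.
(* The invertibility hypotheses are witnessed by [x] and [y] themselves. *)
move=> _ _ xinv yinv; split; apply: left_bc_inverse_mull => //.
- by case: yinv.
- by case: xinv.
Qed.
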